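(* Let $A=(a_{ij})$ and $B=(b_{ij})$ be two $4\times 4$ generalized tournament matrices with equal corresponding principal minors of orders $2$ and $3$. If $\mathcal{D}(A,B)$ and $\mathcal{E}(A,B)$ are both connected, then there exist a permutation matrix $P$ and real numbers $a,b\in[0,1]\setminus\{1/2\}$ such that $A=PM_{a,b}P^{t}$ and $B=PM_{1-a,b}P^{t}$. Moreover, $\det(A)=\det(B)$ if and only if $a=b$ or $a=1-b$.
   Context: A generalized tournament matrix of order $n$ is a real $n\times n$ matrix $M$ with nonnegative entries satisfying $M+M^{t}=J_n-I_n$. When $A,B$ have the same principal minors of order $2$, for $i\neq j$ one has $a_{ij}=b_{ij}$ or $a_{ij}=1-b_{ij}$; $\mathcal{E}(A,B)$ is the undirected graph on $\{1,2,3,4\}$ whose edges are the pairs $\{i,j\}$ with $a_{ij}=b_{ij}\neq 1/2$, and $\mathcal{D}(A,B)$ is the undirected graph on $\{1,2,3,4\}$ whose edges are the pairs $\{i,j\}$ with $a_{ij}=1-b_{ij}$ and $a_{ij}\neq 1/2$. For real $a,b$, $$M_{a,b}=\begin{pmatrix}0&a&b&b\\ 1-a&0&1-a&b\\ 1-b&a&0&a\\ 1-b&1-b&1-a&0\end{pmatrix}.$$ *)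

From HB Require Import structures.
From mathcomp Require Import all_boot all_order all_algebra all_fingroup.
Set Implicit Arguments. Unset Strict Implicit. Unset Printing Implicit Defensive.
Import Order.TTheory GRing.Theory Num.Theory.
Local Open Scope ring_scope.

Definition gen_tournament (R : realFieldType) (n : nat) (M : 'M[R]_n) : Prop :=
  (forall i j, 0 <= M i j) /\
  M + M^T = const_mx 1 - 1%:M.

Definition principal_submx (R : realFieldType) (n : nat) (M : 'M[R]_n)
  (S : {set 'I_n}) : 'M[R]_#|S| :=
  mxsub (fun i : 'I_#|S| => enum_val i) (fun i : 'I_#|S| => enum_val i) M.

Definition principal_minor (R : realFieldType) (n : nat) (M : 'M[R]_n)
  (S : {set 'I_n}) : R := \det (principal_submx M S).

Definition same_pm23 (R : realFieldType) (n : nat) (A B : 'M[R]_n) : Prop :=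
  forall S : {set 'I_n}, (#|S| = 2 \/ #|S| = 3)%N ->
    principal_minor A S = principal_minor B S.

Definition E_edge (R : realFieldType) (n : nat) (A B : 'M[R]_n) : rel 'I_n :=
  fun i j => [&& i != j, A i j == B i j & A i j != 2^-1].

Definition D_edge (R : realFieldType) (n : nat) (A B : 'M[R]_n) : rel 'I_n :=
  fun i j => [&& i != j, A i j == 1 - B i j & A i j != 2^-1].

Definition connected_graph (n : nat) (e : rel 'I_n) : Prop :=
  forall i j : 'I_n, connect e i j.

Definition Mab_entry (R : realFieldType) (a b : R) (i j : nat) : R :=
  match i, j with
  | O, 1%N => a     | O, 2%N => b     | O, 3%N => b
  | 1%N, O => 1 - a | 1%N, 2%N => 1 - a | 1%N, 3%N => b
  | 2%N, O => 1 - b | 2%N, 1%N => a     | 2%N, 3%N => a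
  | 3%N, O => 1 - b | 3%N, 1%N => 1 - b | 3%N, 2%N => 1 - a
  | _, _ => 0
  end.

Definition Mab (R : realFieldType) (a b : R) : 'M[R]_4 :=
  \matrix_(i < 4, j < 4) Mab_entry a b i j.

From HB Require Import structures.
From mathcomp Require Import all_boot all_order all_algebra all_fingroup.
From mathcomp Require Import ring lra.
Import Order.TTheory GRing.Theory Num.Theory.
Set Implicit Arguments.
Unset Strict Implicit.
Unset Printing Implicit Defensive.

(* In a generalized tournament matrix the 3x3 principal minor on a cycle
   i -> j -> k -> i with entries a, b, c is abc + (1-a)(1-b)(1-c).  Replacing
   a, b by 1-a, 1-b changes it by (2c-1)(a+b-1), and replacing a alone by 1-a
   changes it by (2a-1)(b+c-1).  Two edge-disjoint connected spanning
   subgraphs of K4 have three edges each, and since the complement of a star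
   is disconnected, D(A,B) is a Hamiltonian path v0 v1 v2 v3 and E(A,B) is the
   complementary path v2 v0 v3 v1 (a finite check over all pairs of graphs on
   four vertices).  The four triangles then give a(v1,v2) = 1 - a(v0,v1),
   a(v2,v3) = a(v0,v1) and a(v0,v2) = a(v1,v3) = a(v0,v3): after relabelling,
   A = M_{a,b} and B = M_{1-a,b}.  Finally
   det M_{a,b} - det M_{1-a,b} = (1-2b)(2a-1)(a-b)(a+b-1). *)

(* [enum], [#|_|] and hence [connect] are locked and do not compute, so the
   exhaustive check runs on an explicit vertex list and on [dfs]. *)
Definition K4_vertices : seq 'I_4 :=
  [:: Ordinal (isT : 0 < 4); Ordinal (isT : 1 < 4); Ordinal (isT : 2 < 4);
      Ordinal (isT : 3 < 4)].

Lemma mem_K4_vertices i : i \in K4_vertices.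
Proof. by case: i => [[|[|[|[|//]]]] ?]. Qed.

Definition K4_reach (e : rel 'I_4) (x : 'I_4) : seq 'I_4 :=
  dfs (fun y => [seq z <- K4_vertices | e y z]) 4 [::] x.

Lemma connect_K4_reach e x y : connect e x y = (y \in K4_reach e x).
Proof.
have grelE : grel (fun u => [seq z <- K4_vertices | e u z]) =2 e.
  move=> u z; change ((z \in [seq t <- K4_vertices | e u t]) = e u z).
  by rewrite mem_filter mem_K4_vertices andbT.
have := @dfsP _ (fun u => [seq z <- K4_vertices | e u z]) x y.
rewrite card_ord => reach_xy.
by apply/connectP/reach_xy => -[p ep ->]; exists p; rewrite ?(eq_path grelE) in ep *.
Qed.

Fixpoint bitseqs n : seq (seq bool) :=
  if n is n'.+1 then [seq b :: s | b <- [:: false; true], s <- bitseqs n']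
  else [:: [::]].

Lemma bitseqsP n s : size s = n -> s \in bitseqs n.
Proof.
elim: n s => [|n IH] [|b s] // [/IH s_n].
by apply/allpairsP; exists (b, s); case: b.
Qed.

(* The pairs 01, 02, 03, 12, 13, 23 have index i + j - [i * j == 0] = 0, ..., 5. *)
Definition K4_graph (b : seq bool) : rel 'I_4 :=
  fun i j => (i != j) && nth false b (i + j - (i * j == 0)).

Definition K4_code (r : rel 'I_4) : seq bool :=
  [seq r (nth ord0 K4_vertices p.1) (nth ord0 K4_vertices p.2)
  | p <- [:: (0, 1); (0, 2); (0, 3); (1, 2); (1, 3); (2, 3)]].

Lemma K4_graph_code (r : rel 'I_4) :
  irreflexive r -> symmetric r -> r =2 K4_graph (K4_code r).
Proof.
move=> irr sym i j.
have := mem_K4_vertices i; have := mem_K4_vertices j; rewrite !inE.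
by do 2 case/or4P => /eqP->; rewrite /K4_graph /= ?irr // sym.
Qed.

Definition K4_path : rel 'I_4 := fun k l => (k.+1 == l :> nat) || (l.+1 == k :> nat).

(* The path 2 0 3 1. *)
Definition K4_copath : rel 'I_4 := fun k l => (k != l) && ~~ K4_path k l.

Definition K4_admissible (d e : rel 'I_4) : bool :=
  [&& all (fun i => all (fun j => ~~ (d i j && e i j)) K4_vertices) K4_vertices,
      all (mem (K4_reach d ord0)) K4_vertices
    & all (mem (K4_reach e ord0)) K4_vertices].

Definition K4_split (d e : rel 'I_4) (v : seq 'I_4) : bool :=
  all (fun k : 'I_4 => all (fun l : 'I_4 =>
    (d (nth ord0 v k) (nth ord0 v l) == K4_path k l)
    && (e (nth ord0 v k) (nth ord0 v l) == K4_copath k l)) K4_vertices) K4_vertices.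

Lemma K4_split_check :
  all (fun b => has (K4_split (K4_graph b.1) (K4_graph b.2)) (permutations K4_vertices))
    [seq b <- [seq (bd, be) | bd <- bitseqs 6, be <- bitseqs 6]
    | K4_admissible (K4_graph b.1) (K4_graph b.2)].
Proof. by vm_compute. Qed.

Lemma K4_disjoint_connected_split (d e : rel 'I_4) :
  irreflexive d -> symmetric d -> irreflexive e -> symmetric e ->
  (forall i j, d i j -> ~~ e i j) -> connected_graph d -> connected_graph e ->
  exists g : 'S_4,
    forall k l, d (g k) (g l) = K4_path k l /\ e (g k) (g l) = K4_copath k l.
Proof.
move=> irr_d sym_d irr_e sym_e de conn_d conn_e.
have dE := K4_graph_code irr_d sym_d; have eE := K4_graph_code irr_e sym_e.
have : (K4_code d, K4_code e) \in
    [seq b <- [seq (bd, be) | bd <- bitseqs 6, be <- bitseqs 6]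
    | K4_admissible (K4_graph b.1) (K4_graph b.2)].
  rewrite mem_filter allpairs_f ?bitseqsP ?size_map // andbT.
  apply/and3P; split; apply/allP => i _.
  - by apply/allP => j _; rewrite -dE -eE; apply/negP => /andP[/de/negP].
  - by rewrite inE -connect_K4_reach -(eq_connect dE).
  - by rewrite inE -connect_K4_reach -(eq_connect eE).
move/(allP K4_split_check)/hasP => [v /= v_perm v_split].
have [v_uniq v_size] : uniq v /\ size v = 4.
  by rewrite mem_permutations in v_perm; rewrite (perm_uniq v_perm) (perm_size v_perm).
have v_inj : injective (fun k : 'I_4 => nth ord0 v k).
  by move=> k l /eqP; rewrite nth_uniq ?v_size // => /eqP/val_inj.
exists (perm v_inj) => k l; rewrite !permE dE eE.
move/allP: v_split => /(_ k (mem_K4_vertices k)) /allP /(_ l (mem_K4_vertices l)).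
by case/andP => /eqP-> /eqP->.
Qed.

Local Open Scope ring_scope.

Section Determinants.
Variable R : comRingType.

Definition det3 (h : nat -> nat -> R) : R :=
  h 0 0 * h 1 1 * h 2 2 + h 0 1 * h 1 2 * h 2 0 + h 0 2 * h 1 0 * h 2 1
  - h 0 0 * h 1 2 * h 2 1 - h 0 1 * h 1 0 * h 2 2 - h 0 2 * h 1 1 * h 2 0.

Lemma det_mx33 (h : nat -> nat -> R) : \det (\matrix_(i < 3, j < 3) h i j) = det3 h.
Proof.
rewrite !(expand_det_row _ ord0) !big_ord_recr !big_ord0 /= /cofactor.
rewrite !(expand_det_row _ ord0) !big_ord_recr !big_ord0 /= /cofactor.
by rewrite !det_mx11 !mxE /= /det3; ring.
Qed.

Lemma det_mx44 (h : nat -> nat -> R) :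
  \det (\matrix_(i < 4, j < 4) h i j) =
  \sum_(j < 4) (-1) ^+ j * h 0 j * det3 (fun x y => h x.+1 (bump j y)).
Proof.
rewrite (expand_det_row _ ord0); apply: eq_bigr => j _.
rewrite /cofactor mxE add0n mulrCA mulrA -det_mx33; congr (_ * \det _).
by apply/matrixP => i k; rewrite !mxE.
Qed.

Lemma perm_mx_conj n (s : 'S_n) (M : 'M[R]_n) :
  perm_mx s *m M *m (perm_mx s)^T = mxsub s s M.
Proof.
by rewrite tr_perm_mx -col_permE -row_permE; apply/matrixP => i j; rewrite !mxE.
Qed.

Lemma det_mxsub_perm n (s : 'S_n) (M : 'M[R]_n) : \det (mxsub s s M) = \det M.
Proof.
by rewrite -perm_mx_conj !det_mulmx det_tr mulrAC -expr2 det_perm sqrr_sign mul1r.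
Qed.

Lemma mxsub_permK n (s : 'S_n) (M : 'M[R]_n) : mxsub s^-1%g s^-1%g (mxsub s s M) = M.
Proof. by apply/matrixP => i j; rewrite !mxE !permKV. Qed.

Lemma det_mxsub_reindex k n (f g : 'I_k -> 'I_n) (M : 'M[R]_n) :
  injective f -> (forall x, f x \in codom g) ->
  \det (mxsub f f M) = \det (mxsub g g M).
Proof.
move=> f_inj fg; pose p x := iinv (fg x).
have gp x : g (p x) = f x by rewrite f_iinv.
have p_inj : injective p by move=> x y /(congr1 g); rewrite !gp => /f_inj.
rewrite -(det_mxsub_perm (perm p_inj) (mxsub g g M)); congr (\det _).
by apply/matrixP => i j; rewrite !mxE !permE !gp.
Qed.

End Determinants.

Section PrincipalMinors.
Variable R : realFieldType.

Lemma principal_minorE n (M : 'M[R]_n) (S : {set 'I_n}) k (f : 'I_k -> 'I_n) :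
  k = #|S| -> injective f -> (forall x, f x \in S) ->
  principal_minor M S = \det (mxsub f f M).
Proof.
move=> kS f_inj fS; subst k; symmetry; apply: det_mxsub_reindex => // x.
by rewrite -(enum_rankK_in (fS x) (fS x)) codom_f.
Qed.

Lemma principal_minor_mxsub n (s : 'S_n) (M : 'M[R]_n) S :
  principal_minor (mxsub s s M) S = principal_minor M (s @: S).
Proof.
rewrite [RHS](@principal_minorE n M (s @: S) #|S| (s \o enum_val)).
- by rewrite /principal_minor /principal_submx -mxsub_comp.
- by rewrite card_imset //; apply: perm_inj.
- exact: inj_comp perm_inj enum_val_inj.
- by move=> x; apply: imset_f; apply: enum_valP.
Qed.

Lemma same_pm23_mxsub n (s : 'S_n) (A B : 'M[R]_n) :
  same_pm23 A B -> same_pm23 (mxsub s s A) (mxsub s s B).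
Proof.
move=> AB S cardS; rewrite !principal_minor_mxsub; apply: AB.
by rewrite card_imset //; apply: perm_inj.
Qed.

Lemma card_set3 (T : finType) (i j k : T) :
  i != j -> j != k -> k != i -> #|[set i; j; k]| = 3%N.
Proof.
by move=> ij jk ki; rewrite -setUA cardsU1 cards2 jk !inE negb_or ij eq_sym ki.
Qed.

End PrincipalMinors.

Section Tournaments.
Variable R : realFieldType.

Lemma gen_tournamentP n (M : 'M[R]_n) : gen_tournament M ->
  [/\ forall i, M i i = 0, forall i j, i != j -> M j i = 1 - M i j
    & forall i j, 0 <= M i j <= 1].
Proof.
case=> M_ge0 /matrixP M_eq.
have M_sum i j : M i j + M j i = 1 - (i == j)%:R by have := M_eq i j; rewrite !mxE.
have M_diag i : M i i = 0 by have := M_sum i i; rewrite eqxx /=; lra.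
have M_compl i j : i != j -> M j i = 1 - M i j.
  by move=> ij; have := M_sum i j; rewrite (negbTE ij) /=; lra.
split=> // i j; have [<-|ij] := eqVneq i j; first by rewrite M_diag lexx ler01.
by rewrite M_ge0 /=; have := M_ge0 j i; rewrite M_compl //; lra.
Qed.

Lemma gen_tournament_mxsub n (s : 'S_n) (M : 'M[R]_n) :
  gen_tournament M -> gen_tournament (mxsub s s M).
Proof.
case=> M_ge0 /matrixP M_eq; split=> [i j|]; first by rewrite mxE.
by apply/matrixP => i j; have := M_eq (s i) (s j); rewrite !mxE (inj_eq perm_inj).
Qed.

Lemma tournament_eq_upper n (A N : 'M[R]_n) :
  A + A^T = const_mx 1 - 1%:M -> N + N^T = const_mx 1 - 1%:M ->
  (forall i j : 'I_n, (i < j)%N -> A i j = N i j) -> A = N.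
Proof.
move=> /matrixP eqA /matrixP eqN upper; apply/matrixP => i j.
have := eqA i j; have := eqN i j; rewrite !mxE.
case: (ltngtP i j) => [/upper //|/upper AN|/val_inj <-]; last by rewrite eqxx; lra.
by have := eqA j i; have := eqN j i; rewrite !mxE eq_sym AN; lra.
Qed.

Lemma Mab_tournament (a b : R) : Mab a b + (Mab a b)^T = const_mx 1 - 1%:M.
Proof.
apply/matrixP => i j; rewrite !mxE.
by case: i j => [[|[|[|[|//]]]] ?] [[|[|[|[|//]]]] ?] /=; ring.
Qed.

Lemma Mab_upper (M : 'M[R]_4) (a b : R) : M + M^T = const_mx 1 - 1%:M ->
  M (inord 0) (inord 1) = a -> M (inord 0) (inord 2) = b ->
  M (inord 0) (inord 3) = b -> M (inord 1) (inord 2) = 1 - a ->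
  M (inord 1) (inord 3) = b -> M (inord 2) (inord 3) = a ->
  M = Mab a b.
Proof.
move=> eqM m01 m02 m03 m12 m13 m23.
apply: tournament_eq_upper eqM (Mab_tournament a b) _ => i j.
rewrite mxE -[i in M i _]inord_val -[j in M _ j]inord_val.
by case: i j => [[|[|[|[|//]]]] ?] [[|[|[|[|//]]]] ?].
Qed.

Lemma det_Mab_sub (a b : R) :
  \det (Mab a b) - \det (Mab (1 - a) b) =
  (1 - 2 * b) * (2 * a - 1) * (a - b) * (a + b - 1).
Proof. by rewrite /Mab !det_mx44 !big_ord_recr !big_ord0 /det3 /=; ring. Qed.

Lemma det_Mab_eq (a b : R) : a != 2^-1 -> b != 2^-1 ->
  \det (Mab a b) = \det (Mab (1 - a) b) <-> a = b \/ a = 1 - b.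
Proof.
move=> a_half b_half; split=> [/eqP|[]->]; last 2 first.
- by apply/eqP; rewrite -subr_eq0 det_Mab_sub; apply/eqP; ring.
- by apply/eqP; rewrite -subr_eq0 det_Mab_sub; apply/eqP; ring.
rewrite -subr_eq0 det_Mab_sub !mulf_eq0 -!orbA => /or4P[] /eqP h.
- by case/negP: b_half; apply/eqP; lra.
- by case/negP: a_half; apply/eqP; lra.
- by left; lra.
- by right; lra.
Qed.

Definition cyc3 (a b c : R) : R := a * b * c + (1 - a) * (1 - b) * (1 - c).

Lemma cyc3_flip2 (a b c : R) :
  c != 2^-1 -> cyc3 a b c = cyc3 (1 - a) (1 - b) c -> a + b = 1.
Proof.
move=> c_half h.
have : (2 * c - 1) * (a + b - 1) = cyc3 a b c - cyc3 (1 - a) (1 - b) c.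
  by rewrite /cyc3; ring.
rewrite h subrr => /eqP; rewrite mulf_eq0 => /orP[] /eqP h'; last by lra.
by case/negP: c_half; apply/eqP; lra.
Qed.

Lemma cyc3_flip1 (a b c : R) :
  a != 2^-1 -> cyc3 a b c = cyc3 (1 - a) b c -> b + c = 1.
Proof.
move=> a_half h.
have : (2 * a - 1) * (b + c - 1) = cyc3 a b c - cyc3 (1 - a) b c by rewrite /cyc3; ring.
rewrite h subrr => /eqP; rewrite mulf_eq0 => /orP[] /eqP h'; last by lra.
by case/negP: a_half; apply/eqP; lra.
Qed.

Lemma principal_minor3 n (M : 'M[R]_n) i j k : gen_tournament M ->
  i != j -> j != k -> k != i ->
  principal_minor M [set i; j; k] = cyc3 (M i j) (M j k) (M k i).
Proof.
move=> tM ij jk ki; have [M0 Mc _] := gen_tournamentP tM.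
set s := [:: i; j; k]; have s_uniq : uniq s by rewrite /= !inE negb_or ij jk eq_sym ki.
rewrite (@principal_minorE _ _ _ _ 3 (fun x : 'I_3 => nth i s x)) ?card_set3 //.
- have -> : mxsub (fun x : 'I_3 => nth i s x) (fun x : 'I_3 => nth i s x) M =
      \matrix_(x < 3, y < 3) M (nth i s x) (nth i s y).
    by apply/matrixP => x y; rewrite !mxE.
  rewrite (det_mx33 (fun x y => M (nth i s x) (nth i s y))) /det3 /=.
  by rewrite !M0 (Mc _ _ ij) (Mc _ _ jk) (Mc _ _ ki) /cyc3; ring.
- by move=> x y /eqP; rewrite nth_uniq // => /eqP/val_inj.
- by move=> x; rewrite !inE; case: x => [[|[|[|//]]] ?]; rewrite eqxx ?orbT.
Qed.

End Tournaments.

Section Edges.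
Variables (R : realFieldType) (n : nat) (A B : 'M[R]_n).

Lemma D_edgeP i j :
  D_edge A B i j -> [/\ i != j, A i j != 2^-1 & B i j = 1 - A i j].
Proof. by case/and3P => ij /eqP AB half; split=> //; rewrite AB; ring. Qed.

Lemma E_edgeP i j : E_edge A B i j -> [/\ i != j, A i j != 2^-1 & B i j = A i j].
Proof. by case/and3P => ij /eqP AB half. Qed.

Lemma D_edge_irr : irreflexive (D_edge A B).
Proof. by move=> i; rewrite /D_edge eqxx. Qed.

Lemma E_edge_irr : irreflexive (E_edge A B).
Proof. by move=> i; rewrite /E_edge eqxx. Qed.

Lemma D_edge_notE i j : D_edge A B i j -> ~~ E_edge A B i j.
Proof.
case/D_edgeP => _ half BA; apply/negP => /E_edgeP[_ _ BA'].
by case/negP: half; apply/eqP; lra.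
Qed.

Lemma D_edge_mxsub (s : 'S_n) i j :
  D_edge (mxsub s s A) (mxsub s s B) i j = D_edge A B (s i) (s j).
Proof. by rewrite /D_edge !mxE (inj_eq perm_inj). Qed.

Lemma E_edge_mxsub (s : 'S_n) i j :
  E_edge (mxsub s s A) (mxsub s s B) i j = E_edge A B (s i) (s j).
Proof. by rewrite /E_edge !mxE (inj_eq perm_inj). Qed.

Hypotheses (tA : gen_tournament A) (tB : gen_tournament B).

Lemma D_edge_sym : symmetric (D_edge A B).
Proof.
have [_ Ac _] := gen_tournamentP tA; have [_ Bc _] := gen_tournamentP tB.
move=> i j; rewrite /D_edge eq_sym; have [//|ij] := eqVneq j i.
rewrite (Ac _ _ ij) (Bc _ _ ij) /=.
by congr (_ && ~~ _); apply/eqP/eqP => ?; lra.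
Qed.

Lemma E_edge_sym : symmetric (E_edge A B).
Proof.
have [_ Ac _] := gen_tournamentP tA; have [_ Bc _] := gen_tournamentP tB.
move=> i j; rewrite /E_edge eq_sym; have [//|ij] := eqVneq j i.
rewrite (Ac _ _ ij) (Bc _ _ ij) /=.
by congr (_ && ~~ _); apply/eqP/eqP => ?; lra.
Qed.

Hypothesis pmAB : same_pm23 A B.

Lemma same_pm23_cyc3 i j k : i != j -> j != k -> k != i ->
  cyc3 (A i j) (A j k) (A k i) = cyc3 (B i j) (B j k) (B k i).
Proof.
move=> ij jk ki; rewrite -!principal_minor3 //.
by apply: pmAB; right; apply: card_set3.
Qed.

Lemma DDE_triangle i j k :
  D_edge A B i j -> D_edge A B j k -> E_edge A B k i -> A i j + A j k = 1.
Proof.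
move=> /D_edgeP[ij _ Bij] /D_edgeP[jk _ Bjk] /E_edgeP[ki half Bki].
by apply: cyc3_flip2 half _; rewrite -Bij -Bjk -[in RHS]Bki; apply: same_pm23_cyc3.
Qed.

Lemma DEE_triangle i j k :
  D_edge A B i j -> E_edge A B j k -> E_edge A B k i -> A j k + A k i = 1.
Proof.
move=> /D_edgeP[ij half Bij] /E_edgeP[jk _ Bjk] /E_edgeP[ki _ Bki].
apply: cyc3_flip1 half _.
by rewrite -Bij -[in RHS]Bjk -[in RHS]Bki; apply: same_pm23_cyc3.
Qed.

End Edges.

Section PathSplit.
Variables (R : realFieldType) (A B : 'M[R]_4).
Hypotheses (tA : gen_tournament A) (tB : gen_tournament B) (pmAB : same_pm23 A B).
Hypothesis D_path : forall k l, D_edge A B k l = K4_path k l.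
Hypothesis E_copath : forall k l, E_edge A B k l = K4_copath k l.

Lemma Mab_of_K4_path : exists a b : R,
  [/\ 0 <= a <= 1, a != 2^-1, 0 <= b <= 1 & b != 2^-1] /\
  A = Mab a b /\ B = Mab (1 - a) b.
Proof.
have [_ Ac Ab] := gen_tournamentP tA.
have D01 : D_edge A B (inord 0) (inord 1) by rewrite D_path /K4_path !inordK.
have D12 : D_edge A B (inord 1) (inord 2) by rewrite D_path /K4_path !inordK.
have D23 : D_edge A B (inord 2) (inord 3) by rewrite D_path /K4_path !inordK.
have E k l : (k < 4)%N -> (l < 4)%N -> (k != l) && ~~ ((k.+1 == l) || (l.+1 == k)) ->
    E_edge A B (inord k) (inord l).
  by move=> k4 l4; rewrite E_copath /K4_copath /K4_path -val_eqE /= !inordK.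
have [[E02 E03] E13] := (E 0 2 isT isT isT, E 0 3 isT isT isT, E 1 3 isT isT isT).
have [[E20 E30] E31] := (E 2 0 isT isT isT, E 3 0 isT isT isT, E 3 1 isT isT isT).
have t012 := DDE_triangle tA tB pmAB D01 D12 E20.
have t123 := DDE_triangle tA tB pmAB D12 D23 E31.
have t013 := DEE_triangle tA tB pmAB D01 E13 E30.
have t230 := DEE_triangle tA tB pmAB D23 E30 E02.
have [n03 h03 B03] := E_edgeP E03; have A30 := Ac _ _ n03.
have [_ h01 B01] := D_edgeP D01; have [_ _ B12] := D_edgeP D12.
have [_ _ B23] := D_edgeP D23; have [_ _ B02] := E_edgeP E02; have [_ _ B13] := E_edgeP E13.
exists (A (inord 0) (inord 1)), (A (inord 0) (inord 3)); split; first by rewrite !Ab.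
by split; apply: Mab_upper; rewrite ?(proj2 tA) ?(proj2 tB) //; lra.
Qed.

End PathSplit.

Theorem lemma4p5 (R : realFieldType) (A B : 'M[R]_4) :
  gen_tournament A -> gen_tournament B ->
  same_pm23 A B ->
  connected_graph (D_edge A B) -> connected_graph (E_edge A B) ->
  exists (s : 'S_4) (a b : R),
    [/\ 0 <= a <= 1, a != 2^-1, 0 <= b <= 1 & b != 2^-1] /\
    [/\ A = perm_mx s *m Mab a b *m (perm_mx s)^T,
        B = perm_mx s *m Mab (1 - a) b *m (perm_mx s)^T
      & (\det A = \det B <-> a = b \/ a = 1 - b)].
Proof.
move=> tA tB pmAB conn_D conn_E.
have [g g_split] := K4_disjoint_connected_split (D_edge_irr A B) (D_edge_sym tA tB)
  (E_edge_irr A B) (E_edge_sym tA tB) (@D_edge_notE _ _ A B) conn_D conn_E.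
have [a [b [ab [Ag Bg]]]] := Mab_of_K4_path (gen_tournament_mxsub g tA)
  (gen_tournament_mxsub g tB) (same_pm23_mxsub g pmAB)
  (fun k l => etrans (D_edge_mxsub A B g k l) (g_split k l).1)
  (fun k l => etrans (E_edge_mxsub A B g k l) (g_split k l).2).
exists g^-1%g, a, b; split=> //.
rewrite !perm_mx_conj -Ag -Bg !mxsub_permK.
rewrite -(det_mxsub_perm g A) -(det_mxsub_perm g B) Ag Bg.
by split=> //; case: ab => _ a_half _ b_half; apply: det_Mab_eq.
Qed.
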